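(* There exist supplementary difference sets in $\mathbb{Z}_{59}$ with parameters $(59;28,22;21)$; that is, there exist subsets $X,Y\subseteq\mathbb{Z}_{59}$ with $|X|=28$, $|Y|=22$ such that for every nonzero $c\in\mathbb{Z}_{59}$, the number of ordered pairs $(a,b)\in X\times X$ with $a-b\equiv c\pmod{59}$ plus the number of ordered pairs $(a,b)\in Y\times Y$ with $a-b\equiv c\pmod{59}$ equals $21$.
   Context: $\mathbb{Z}_v$ denotes the ring of integers modulo $v$. Subsets $X_1,\dots,X_t\subseteq\mathbb{Z}_v$ with $|X_i|=k_i$ are supplementary difference sets (SDS) with parameters $(v;k_1,\dots,k_t;\lambda)$ if for every nonzero $c\in\mathbb{Z}_v$ there are exactly $\lambda$ ordered triples $(a,b,i)$ with $a,b\in X_i$ and $a-b\equiv c\pmod v$. *)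

From HB Require Import structures.
From mathcomp Require Import all_boot all_order all_algebra.
Set Implicit Arguments. Unset Strict Implicit. Unset Printing Implicit Defensive.
Import GRing.Theory.
Local Open Scope ring_scope.

Definition diff_count (v : nat) (X : {set 'Z_v}) (c : 'Z_v) : nat :=
  #|[set p : 'Z_v * 'Z_v | (p.1 \in X) && (p.2 \in X) && (p.1 - p.2 == c)]|.

Definition is_SDS (v : nat) (ks : seq nat) (lambda : nat)
  (Xs : seq {set 'Z_v}) : Prop :=
  map (fun X : {set 'Z_v} => #|X|) Xs = ks /\
  forall c : 'Z_v, c != 0 ->
    sumn (map (fun X : {set 'Z_v} => diff_count X c) Xs) = lambda.

From mathcomp Require Import all_boot all_order all_algebra.
Import GRing.Theory.

(* The two sets are exhibited explicitly.  Their sizes and difference counts are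
   translated into counts over the naturals [0, v), where they are checked by
   evaluation. *)

Lemma diff_count_shift (v : nat) (X : {set 'Z_v}) (c : 'Z_v) :
  diff_count X c = #|[pred a : 'Z_v | (a \in X) && ((a - c)%R \in X)]|.
Proof.
rewrite /diff_count.
have -> : [set p : 'Z_v * 'Z_v | (p.1 \in X) && (p.2 \in X) && (p.1 - p.2 == c)%R]
    = (fun a => (a, a - c)%R) @: [set a | (a \in X) && ((a - c)%R \in X)].
  apply/setP => -[a b]; rewrite inE /=; apply/idP/imsetP.
  - case/andP => /andP[Xa Xb] /eqP <-.
    by exists a; rewrite ?inE opprB addrC subrK ?Xa ?Xb.
  - by case=> x; rewrite inE => /andP[Xx Xxc] [-> ->]; rewrite Xx Xxc subKr eqxx.
rewrite card_imset; last by move=> a b [].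
by apply: eq_card => a; rewrite !inE.
Qed.

Lemma card_ord_pred (m : nat) (P : pred nat) :
  #|[pred i : 'I_m | P (val i)]| = count P (iota 0 m).
Proof. by rewrite cardE /enum_mem size_filter -enumT /= -val_enum_ord count_map. Qed.

Section NatCertificate.

(* Writing the modulus as [n.+2] makes ['Z_v] convertible to ['I_v]. *)
Variable n : nat.
Local Notation v := n.+2.

Definition Zset (s : seq nat) : {set 'Z_v} := [set a : 'Z_v | val a \in s].

Definition diff_count_nat (s : seq nat) (c : nat) : nat :=
  count (fun a => (a \in s) && ((a + (v - c)) %% v \in s)) (iota 0 v).

Lemma val_subZp (a c : 'Z_v) : val (a - c)%R = (a + (v - c)) %% v.
Proof. exact: modnDmr. Qed.

Lemma card_Zset (s : seq nat) : #|Zset s| = count (mem s) (iota 0 v).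
Proof. by rewrite -card_ord_pred; apply: eq_card => a; rewrite !inE. Qed.

Lemma diff_count_Zset (s : seq nat) (c : 'Z_v) :
  diff_count (Zset s) c = diff_count_nat s c.
Proof.
rewrite diff_count_shift /diff_count_nat -card_ord_pred.
by apply: eq_card => a; rewrite !inE val_subZp.
Qed.

Definition SDS_certificate (ks : seq nat) (lambda : nat) (ss : seq (seq nat)) :=
  (map (fun s => count (mem s) (iota 0 v)) ss == ks) &&
  all (fun c => sumn (map (diff_count_nat ^~ c) ss) == lambda) (iota 1 v.-1).

Lemma is_SDS_Zset (ks : seq nat) (lambda : nat) (ss : seq (seq nat)) :
  SDS_certificate ks lambda ss -> is_SDS ks lambda (map Zset ss).
Proof.
case/andP => /eqP sizes /allP counts; split.
  by rewrite -map_comp -sizes; apply: eq_map => s; exact: card_Zset.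
move=> c c_neq0; rewrite -map_comp.
have -> : map (fun s => diff_count (Zset s) c) ss = map (diff_count_nat ^~ c) ss.
  by apply: eq_map => s; exact: diff_count_Zset.
apply/eqP/counts; rewrite mem_iota lt0n ltn_ord andbT.
by apply: contra c_neq0 => /eqP c0; apply/eqP/val_inj.
Qed.

End NatCertificate.

Definition X59 : seq nat :=
  [:: 1; 5; 7; 8; 11; 12; 13; 15; 16; 17; 19; 20; 22; 28;
      29; 30; 31; 33; 34; 35; 39; 40; 41; 42; 47; 50; 55; 57].
Definition Y59 : seq nat :=
  [:: 1; 3; 5; 6; 7; 10; 12; 13; 16; 17; 21; 29; 30; 31; 34; 37; 39; 46; 49; 50; 52; 58].

Theorem mainTheorem7 :
  exists X Y : {set 'Z_59}, is_SDS [:: 28; 22]%N 21 [:: X; Y].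
Proof.
exists (Zset 57 X59), (Zset 57 Y59).
apply: (@is_SDS_Zset 57 _ _ [:: X59; Y59]).
by vm_compute.
Qed.
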